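(* Let $G$ be a maximal outerplanar graph of order $n\geq 3$, and let $t$ be the number of vertices of degree $2$ in $G$. Then $\gamma_{\times 2}(G)\leq \lfloor \frac{n+t}{2}\rfloor$. *)

From mathcomp Require Import all_boot.
Set Implicit Arguments. Unset Strict Implicit. Unset Printing Implicit Defensive.

Section Graphs.
Variable T : finType.

Definition simple_graph (e : rel T) : Prop := symmetric e /\ irreflexive e.

Definition deg (e : rel T) (v : T) : nat := #|[set u | e v u]|.

Definition num_deg2 (e : rel T) : nat := #|[set v | deg e v == 2]|.

Definition cnbhd (e : rel T) (v : T) : {set T} := v |: [set u | e v u].

Definition double_dominating (e : rel T) (S : {set T}) : bool :=
  [forall v, 2 <= #|cnbhd e v :&: S|].

(* double domination number: least size of a double dominating set
   (default #|T| if none exists, which never happens when there is no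
   isolated vertex) *)
Definition double_dom_number (e : rel T) : nat :=
  \big[minn/#|T|]_(S : {set T} | double_dominating e S) #|S|.

(* Placing the vertices in convex position on a circle according to an
   injective labelling f : T -> 'I_#|T| (cyclic order), the chords ab and cd
   cross iff a,b,c,d are pairwise distinct and exactly one of c,d lies
   strictly between a and b. *)
Definition chords_cross (f : T -> 'I_#|T|) (a b c d : T) : bool :=
  let lo := minn (f a) (f b) in
  let hi := maxn (f a) (f b) in
  let inside x := (lo < x < hi) in
  [&& a != b, c != d, a != c, a != d, b != c, b != d &
      inside (f c : nat) != inside (f d : nat)].

(* outerplanar: admits a drawing with all vertices on a circle and edges as
   straight chords, no two of which cross *)
Definition outerplanar (e : rel T) : Prop :=
  exists f : T -> 'I_#|T|, injective f /\
    forall a b c d, e a b -> e c d -> ~~ chords_cross f a b c d.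

Definition add_edge (e : rel T) (u v : T) : rel T :=
  fun x y => e x y || ((x == u) && (y == v)) || ((x == v) && (y == u)).

Definition maximal_outerplanar (e : rel T) : Prop :=
  outerplanar e /\
  forall u v, u != v -> ~~ e u v -> ~ outerplanar (add_edge e u v).

End Graphs.

From mathcomp Require Import all_boot zify.
Set Implicit Arguments. Unset Strict Implicit. Unset Printing Implicit Defensive.

(* Draw G with its vertices on a circle at positions 0 .. n-1.  Maximality
   makes G a triangulation of the polygon: the chord 0(n-1) is an edge, and
   every edge ab with a + 1 < b is the side of a triangle abc with a < c < b.
   We run a dynamic programme along this triangulation: to each edge ab we
   attach a profile, a table of the costs at which the vertices strictly
   between a and b can be doubly dominated under given boundary conditions at
   a and b.  A family of 15 profiles, found by computer search, is closed
   under gluing the two sides of a triangle and closes up at the outer edge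
   with the bound (n + t) / 2; both facts are finite checks done by evaluation. *)

Definition between (p q r : nat) : bool := minn p q < r < maxn p q.

Definition crossing (p q r s : nat) : bool :=
  [&& p != q, r != s, p != r, p != s, q != r, q != s &
      between p q r != between p q s].

Lemma between_lt p q r : p < q -> between p q r = (p < r < q).
Proof. by move=> lt_pq; rewrite /between (minn_idPl (ltnW lt_pq)) (maxn_idPr (ltnW lt_pq)). Qed.

Lemma crossing_sym p q r s : crossing p q r s = crossing r s p q.
Proof.
rewrite /crossing /between.
case: (ltngtP p q) => [h|h|->]; last by rewrite eqxx /= ?andbF.
all: case: (ltngtP r s) => [h'|h'|->]; last by rewrite eqxx /= ?andbF.
all: rewrite ?(minn_idPl (ltnW h)) ?(maxn_idPr (ltnW h))
             ?(minn_idPr (ltnW h)) ?(maxn_idPl (ltnW h)).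
all: rewrite ?(minn_idPl (ltnW h')) ?(maxn_idPr (ltnW h'))
             ?(minn_idPr (ltnW h')) ?(maxn_idPl (ltnW h')).
all: case: (ltngtP p r) => // H1; case: (ltngtP p s) => // H2.
all: case: (ltngtP q r) => // H3; case: (ltngtP q s) => // H4.
all: rewrite ?eqxx ?andbF //=; lia.
Qed.

Lemma crossing_swap p q r s : crossing p q r s = crossing q p r s.
Proof.
rewrite /crossing /between minnC maxnC.
case: (ltngtP p q) => [h|h|->] //.
all: case: (ltngtP p r) => // H1; case: (ltngtP p s) => // H2.
all: case: (ltngtP q r) => // H3; case: (ltngtP q s) => // H4.
all: rewrite ?eqxx ?andbF //=; lia.
Qed.

Lemma crossing_nested p q r s : p < r < q -> s < p \/ q < s -> crossing p q r s.
Proof.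
move=> r_in s_out; have lt_pq : p < q by lia.
rewrite /crossing !between_lt // r_in.
have -> : (p < s < q) = false by apply/negbTE/negP => /andP[]; lia.
by repeat (apply/andP; split); apply/eqP; lia.
Qed.

Lemma chords_cross_crossing (T : finType) (f : T -> 'I_#|T|) a b c d :
  injective f -> chords_cross f a b c d = crossing (f a) (f b) (f c) (f d).
Proof. by move=> f_inj; rewrite /chords_cross /crossing /between -!(inj_eq f_inj). Qed.

Lemma outerplanar_add_edge (T : finType) (e : rel T) (f : T -> 'I_#|T|) (x y : T) :
  injective f -> (forall a b c d, e a b -> e c d -> ~~ chords_cross f a b c d) ->
  (forall c d, e c d -> ~~ chords_cross f x y c d) -> outerplanar (add_edge e x y).
Proof.
move=> f_inj e_nc xy_nc; exists f; split => // a b c d.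
have cc := chords_cross_crossing _ _ _ _ f_inj.
rewrite /add_edge => /orP[/orP[e_ab|/andP[/eqP-> /eqP->]]|/andP[/eqP-> /eqP->]]
  /orP[/orP[e_cd|/andP[/eqP-> /eqP->]]|/andP[/eqP-> /eqP->]];
  rewrite ?cc; try by rewrite /crossing !eqxx /= ?andbF.
- by rewrite -cc e_nc.
- by rewrite crossing_sym -cc xy_nc.
- by rewrite crossing_sym crossing_swap -cc xy_nc.
- by rewrite -cc xy_nc.
- by rewrite crossing_swap -cc xy_nc.
Qed.

(* For a chord ab of the triangulation (a < b) consider the
   vertices strictly between a and b.  A state (xa, xb, Da, Db) records whether
   a and b are in the dominating set and how many chosen inner vertices must be
   adjacent to a and to b; a profile assigns to each state an optional cost.
   The profiles below were found by exhaustive search; two boolean checks,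
   evaluated by computation, show that they are stable under gluing two
   sub-polygons along a triangle and that they close up at the outer edge. *)
Definition profile := seq (option nat).

Definition state (xa xb : bool) (Da Db : nat) : nat := ((xa * 2 + xb) * 3 + Da) * 3 + Db.

Definition cost (p : profile) (xa xb : bool) (Da Db : nat) : option nat :=
  nth None p (state xa xb Da Db).

(* Costs are shifted by this offset so that they are natural numbers. *)
Definition cost_offset := 3.

(* A profile is given as 36 digits, one line per value of (xa, xb) and one
   group of three per value of Da; the digit 9 marks an unrealisable state. *)
Definition decode (s : seq nat) : profile := [seq if k <= 3 then Some k else None | k <- s].

Definition profiles : seq profile := map decode [::
  [:: 2; 2; 9;  9; 9; 9;  9; 9; 9;
       2; 2; 9;  9; 9; 9;  9; 9; 9;
       2; 2; 9;  9; 9; 9;  9; 9; 9;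
       2; 2; 9;  9; 9; 9;  9; 9; 9];
  [:: 2; 9; 9;  2; 9; 9;  9; 9; 9;
       2; 9; 9;  2; 9; 9;  9; 9; 9;
       2; 9; 9;  2; 9; 9;  9; 9; 9;
       2; 9; 9;  2; 9; 9;  9; 9; 9];
  [:: 3; 3; 3;  3; 3; 3;  9; 9; 9;
       3; 3; 3;  3; 3; 3;  9; 9; 9;
       3; 3; 3;  3; 3; 3;  9; 9; 9;
       3; 3; 3;  3; 3; 3;  9; 9; 9];
  [:: 3; 3; 9;  3; 3; 9;  3; 3; 9;
       3; 3; 9;  3; 3; 9;  3; 3; 9;
       3; 3; 9;  3; 3; 9;  3; 3; 9;
       3; 3; 9;  3; 3; 9;  3; 3; 9];
  [:: 9; 9; 9;  9; 9; 9;  9; 9; 9;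
       2; 2; 2;  9; 9; 9;  9; 9; 9;
       2; 2; 2;  9; 9; 9;  9; 9; 9;
       2; 2; 2;  9; 9; 9;  9; 9; 9];
  [:: 9; 9; 9;  9; 9; 9;  9; 9; 9;
       2; 2; 9;  2; 2; 9;  9; 9; 9;
       9; 9; 9;  9; 9; 9;  9; 9; 9;
       2; 2; 9;  2; 2; 9;  9; 9; 9];
  [:: 9; 9; 9;  9; 9; 9;  9; 9; 9;
       2; 9; 9;  2; 9; 9;  2; 9; 9;
       2; 9; 9;  2; 9; 9;  2; 9; 9;
       2; 9; 9;  2; 9; 9;  2; 9; 9];
  [:: 9; 9; 9;  9; 9; 9;  9; 9; 9;
       1; 1; 3;  3; 3; 3;  9; 9; 9;
       9; 9; 9;  9; 9; 9;  9; 9; 9;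
       1; 1; 3;  3; 3; 3;  9; 9; 9];
  [:: 9; 9; 9;  9; 9; 9;  9; 9; 9;
       3; 3; 3;  3; 3; 3;  3; 3; 3;
       9; 9; 9;  9; 9; 9;  9; 9; 9;
       1; 1; 1;  1; 1; 1;  3; 3; 3];
  [:: 9; 9; 9;  9; 9; 9;  9; 9; 9;
       3; 3; 9;  3; 3; 9;  9; 9; 9;
       3; 3; 9;  3; 3; 9;  9; 9; 9;
       1; 3; 9;  3; 3; 9;  9; 9; 9];
  [:: 9; 9; 9;  9; 9; 9;  9; 9; 9;
       9; 9; 9;  9; 9; 9;  9; 9; 9;
       2; 2; 9;  2; 2; 9;  9; 9; 9;
       2; 2; 9;  2; 2; 9;  9; 9; 9];
  [:: 9; 9; 9;  9; 9; 9;  9; 9; 9;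
       9; 9; 9;  9; 9; 9;  9; 9; 9;
       1; 3; 9;  1; 3; 9;  3; 3; 9;
       1; 3; 9;  1; 3; 9;  3; 3; 9];
  [:: 9; 9; 9;  9; 9; 9;  9; 9; 9;
       9; 9; 9;  9; 9; 9;  9; 9; 9;
       3; 3; 3;  3; 3; 3;  3; 3; 3;
       1; 1; 3;  1; 1; 3;  1; 1; 3];
  [:: 9; 9; 9;  9; 9; 9;  9; 9; 9;
       9; 9; 9;  9; 9; 9;  9; 9; 9;
       9; 9; 9;  9; 9; 9;  9; 9; 9;
       1; 1; 1;  1; 1; 1;  1; 1; 1];
  [:: 9; 9; 9;  9; 9; 9;  9; 9; 9;
       9; 9; 9;  9; 9; 9;  9; 9; 9;
       9; 9; 9;  9; 9; 9;  9; 9; 9;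
       0; 0; 2;  0; 0; 2;  2; 2; 2]
].

(* The profile of a polygon edge (a, a+1): no inner vertex, no demands. *)
Definition edge_profile : profile :=
  [seq if i %% 9 == 0 then Some cost_offset else None | i <- iota 0 36].

(* Profiles tagged with a flag telling whether the chord is a polygon edge. *)
Definition tagged_profiles : seq (profile * bool) :=
  (edge_profile, true) :: [seq (p, false) | p <- profiles].

Definition bools := [:: false; true].
Definition demands := iota 0 3.

(* Realising state (xa, xb, Da, Db) of the chord ab at cost Q from the apex c
   of the triangle abc, with c chosen iff xc and with d1 (resp. d2) chosen
   neighbours of c on the side of ac (resp. cb): c must be doubly dominated,
   and the costs must add up; [ear] says that c has degree 2. *)
Definition glue_step_ok (p1 p2 : profile) (ear xa xb : bool) (Da Db Q : nat)
    (xc : bool) (d1 d2 : nat) : bool :=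
  (2 <= xa + xb + xc + d1 + d2) &&
  match cost p1 xa xc (Da - xc) d1, cost p2 xc xb d2 (Db - xc) with
  | Some Q1, Some Q2 => Q1 + Q2 + 2 * xc <= Q + cost_offset + 1 + ear
  | _, _ => false
  end.

Definition glue_ok (p1 p2 : profile) (ear : bool) (q : profile) : bool :=
  all (fun xa => all (fun xb => all (fun Da => all (fun Db =>
    if cost q xa xb Da Db is Some Q then
      has (fun xc => has (fun d1 => has (fun d2 =>
        glue_step_ok p1 p2 ear xa xb Da Db Q xc d1 d2) demands) demands) bools
    else true) demands) demands) bools) bools.

Definition closure_ok : bool :=
  all (fun pe1 => all (fun pe2 =>
    has (glue_ok pe1.1 pe2.1 (pe1.2 && pe2.2)) profiles) tagged_profiles) tagged_profiles.

(* Closing the outer edge 0N with apex c: the three triangle vertices must be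
   doubly dominated and the total cost must fit the bound (n + t) / 2; the
   flags [e1], [e2] say that 0, resp. N, has degree 2. *)
Definition top_step_ok (p1 p2 : profile) (e1 e2 xa xb xc : bool) (d1a d1b d2a d2b : nat) :=
  [&& 2 <= xa + xb + xc + d1a, 2 <= xa + xb + xc + d2b,
      2 <= xa + xb + xc + d1b + d2a &
  match cost p1 xa xc d1a d1b, cost p2 xc xb d2a d2b with
  | Some Q1, Some Q2 =>
      2 * (xa + xb + xc) + Q1 + Q2 <= 3 + (e1 && e2) + e1 + e2 + 2 * cost_offset
  | _, _ => false
  end].

Definition top_pair_ok (pe1 pe2 : profile * bool) : bool :=
  has (fun xa => has (fun xb => has (fun xc =>
  has (fun d1a => has (fun d1b => has (fun d2a => has (fun d2b =>
    top_step_ok pe1.1 pe2.1 pe1.2 pe2.2 xa xb xc d1a d1b d2a d2b)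
  demands) demands) demands) demands) bools) bools) bools.

Definition top_ok : bool :=
  all (fun pe1 => all (top_pair_ok pe1) tagged_profiles) tagged_profiles.

Lemma closure_okT : closure_ok. Proof. by vm_compute. Qed.
Lemma top_okT : top_ok. Proof. by vm_compute. Qed.

Lemma leq_bool (b1 b2 : bool) : (b1 -> b2) -> b1 <= b2.
Proof. by case: b1; case: b2 => // /(_ isT). Qed.

Lemma sum_split3 a c b (F : nat -> nat) : a < c -> c < b ->
  \sum_(a.+1 <= u < b) F u = \sum_(a.+1 <= u < c) F u + F c + \sum_(c.+1 <= u < b) F u.
Proof.
move=> lt_ac lt_cb; rewrite (@big_cat_nat _ _ _ c) //= ?(ltnW lt_cb) //.
by rewrite (@big_ltn _ _ _ c) // addnA.
Qed.

Lemma sum_frame a b (F : nat -> nat) : a < b ->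
  \sum_(a <= u < b.+1) F u = F a + \sum_(a.+1 <= u < b) F u + F b.
Proof. by move=> lt_ab; rewrite big_nat_recr ?(ltnW lt_ab) // big_ltn. Qed.

Definition frame a b (xa xb : bool) (S : nat -> bool) u :=
  if u == a then xa else if u == b then xb else S u.

Lemma sum_frame_set a b xa xb S (H : bool -> nat -> nat) : a < b ->
  \sum_(a <= u < b.+1) H (frame a b xa xb S u) u =
  H xa a + \sum_(a.+1 <= u < b) H (S u) u + H xb b.
Proof.
move=> lt_ab; rewrite sum_frame //; congr (_ + _ + _); first by rewrite /frame eqxx.
  by apply: eq_big_nat => u u_in; rewrite /frame !ifF //; apply/eqP; lia.
by rewrite /frame ifF ?eqxx //; apply/eqP; lia.
Qed.

Section Certificates.

(* An abstract graph on positions [adj] with a marking [deg2] of the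
   vertices of degree 2; sets of positions are boolean predicates. *)
Variable adj : rel nat.
Hypothesis adj_sym : symmetric adj.
Variable deg2 : nat -> bool.

Definition size_in (S : nat -> bool) a b := \sum_(a.+1 <= u < b) S u.
Definition nbrs_in (S : nat -> bool) a b x := \sum_(a.+1 <= u < b) (S u && adj x u).
Definition cdom_in (S : nat -> bool) a b w := \sum_(a.+1 <= u < b) (S u && ((u == w) || adj w u)).
Definition deg2_in a b := \sum_(a.+1 <= u < b) deg2 u.

Lemma nbrs_le_cdom S a b w : nbrs_in S a b w <= cdom_in S a b w.
Proof. by apply: leq_sum => u _; case: (S u); rewrite //= orbC; case: (adj w u). Qed.

(* S realises state (xa, xb, Da, Db) of the chord ab at cost Q: S is small
   enough (twice its size is at most the number of inner vertices plus the
   number of inner degree-2 vertices, up to Q - cost_offset), has the demanded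
   numbers of neighbours of a and b, and together with the chosen endpoints
   doubly dominates every inner vertex. *)
Definition realizes a b (xa xb : bool) (Da Db Q : nat) (S : nat -> bool) : Prop :=
  [/\ 2 * size_in S a b + cost_offset <= (b - a).-1 + deg2_in a b + Q,
      Da <= nbrs_in S a b a, Db <= nbrs_in S a b b &
      forall w, a < w < b -> 2 <= (xa && adj w a) + (xb && adj w b) + cdom_in S a b w].

Definition valid a b (p : profile) : Prop :=
  forall (xa xb : bool) Da Db Q, Da <= 2 -> Db <= 2 ->
  cost p xa xb Da Db = Some Q -> exists S, realizes a b xa xb Da Db Q S.

Definition glue c (S1 : nat -> bool) (xc : bool) (S2 : nat -> bool) u :=
  if u < c then S1 u else if u == c then xc else S2 u.

Lemma sum_glue a c b S1 xc S2 (H : bool -> nat -> nat) : a < c -> c < b ->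
  \sum_(a.+1 <= u < b) H (glue c S1 xc S2 u) u =
  \sum_(a.+1 <= u < c) H (S1 u) u + H xc c + \sum_(c.+1 <= u < b) H (S2 u) u.
Proof.
move=> lt_ac lt_cb; rewrite (sum_split3 _ lt_ac lt_cb); congr (_ + _ + _).
- by apply: eq_big_nat => u u_in; rewrite /glue ifT //; lia.
- by rewrite /glue ltnn eqxx.
- apply: eq_big_nat => u u_in; rewrite /glue ifF; last lia.
  by rewrite ifF //; apply/eqP; lia.
Qed.

(* The glued set realises the union of the two states: the apex counts once
   in the size and as a neighbour of a and b, and it is doubly dominated as
   soon as the triangle provides two chosen vertices in its neighbourhood. *)
Lemma realizes_glue a c b (xa xb xc : bool) Da1 d1 Q1 d2 Db2 Q2 S1 S2 :
  a < c < b -> adj a c -> adj c b ->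
  realizes a c xa xc Da1 d1 Q1 S1 -> realizes c b xc xb d2 Db2 Q2 S2 ->
  2 <= xa + xb + xc + d1 + d2 ->
  let S := glue c S1 xc S2 in
  [/\ 2 * size_in S a b + 2 * cost_offset + 1 + deg2 c
        <= (b - a).-1 + deg2_in a b + Q1 + Q2 + 2 * xc,
      xc + Da1 <= nbrs_in S a b a, xc + Db2 <= nbrs_in S a b b &
      forall w, a < w < b -> 2 <= (xa && adj w a) + (xb && adj w b) + cdom_in S a b w].
Proof.
move=> /andP[lt_ac lt_cb] adj_ac adj_cb [cost1 Da1_le d1_le dom1]
  [cost2 d2_le Db2_le dom2] dom_c S.
have sumS := sum_glue S1 xc S2 _ lt_ac lt_cb.
split.
- rewrite /size_in (sumS (fun x _ => nat_of_bool x)).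
  rewrite /deg2_in (sumS (fun _ u => nat_of_bool (deg2 u))).
  move: cost1 cost2; rewrite /size_in /deg2_in; lia.
- rewrite /nbrs_in (sumS (fun x u => x && adj a u)) /= adj_ac andbT.
  by move: Da1_le; rewrite /nbrs_in; lia.
- rewrite /nbrs_in (sumS (fun x u => x && adj b u)) /= adj_sym adj_cb andbT.
  by move: Db2_le; rewrite /nbrs_in; lia.
move=> w /andP[lt_aw lt_wb]; rewrite /cdom_in.
rewrite (sumS (fun x u => x && ((u == w) || adj w u))) /=.
have apex_le (x : bool) : x && adj w c <= x && ((c == w) || adj w c).
  by case: x; rewrite //= orbC; case: (adj w c).
case: (ltngtP w c) => [lt_wc|lt_cw|eq_wc].
- have := dom1 w ltac:(by rewrite lt_aw); rewrite /cdom_in; have := apex_le xc; lia.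
- have := dom2 w ltac:(by rewrite lt_cw); rewrite /cdom_in; have := apex_le xc; lia.
subst w; rewrite adj_sym adj_ac adj_cb /= !andbT.
have := nbrs_le_cdom S1 a c c; have := nbrs_le_cdom S2 c b c.
move: dom_c d1_le d2_le; rewrite /nbrs_in /cdom_in; lia.
Qed.

Lemma mem_bools (x : bool) : x \in bools. Proof. by case: x. Qed.
Lemma mem_demands x : (x \in demands) = (x <= 2). Proof. by rewrite mem_iota. Qed.

Lemma valid_edge a : valid a a.+1 edge_profile.
Proof.
move=> xa xb Da Db Q Da_le Db_le.
have -> : cost edge_profile xa xb Da Db =
    if (Da == 0) && (Db == 0) then Some cost_offset else None.
  by case: xa; case: xb; case: Da Da_le => [|[|[|]]] //; case: Db Db_le => [|[|[|]]].
case: ifP => // /andP[/eqP-> /eqP->] [<-]; exists (fun _ => false).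
by split=> [|||w]; rewrite /size_in ?big_geq //; lia.
Qed.

Lemma valid_glue a c b p1 p2 q (ear : bool) : a < c < b -> adj a c -> adj c b ->
  (ear -> deg2 c) -> valid a c p1 -> valid c b p2 -> glue_ok p1 p2 ear q -> valid a b q.
Proof.
move=> acb adj_ac adj_cb ear_deg2 valid1 valid2 ok xa xb Da Db Q Da_le Db_le cost_Q.
move: ok => /allP/(_ xa (mem_bools _))/allP/(_ xb (mem_bools _)).
move=> /allP/(_ Da ltac:(by rewrite mem_demands))/allP/(_ Db ltac:(by rewrite mem_demands)).
rewrite cost_Q => /hasP[xc _ /hasP[d1 d1_in /hasP[d2 d2_in /andP[dom_c]]]].
case E1: cost => [Q1|] //; case E2: cost => [Q2|] // cost_le.
rewrite mem_demands in d1_in; rewrite mem_demands in d2_in.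
have [S1 real1] := valid1 _ _ _ _ _ (leq_trans (leq_subr _ _) Da_le) d1_in E1.
have [S2 real2] := valid2 _ _ _ _ _ d2_in (leq_trans (leq_subr _ _) Db_le) E2.
have [size_S nbrs_a nbrs_b dom_S] := realizes_glue acb adj_ac adj_cb real1 real2 dom_c.
have ear_le := leq_bool ear_deg2.
by exists (glue c S1 xc S2); split=> //; lia.
Qed.

Lemma frame_dominates a b (xa xb : bool) S : a < b -> adj a b ->
  2 <= xa + xb + nbrs_in S a b a -> 2 <= xa + xb + nbrs_in S a b b ->
  (forall w, a < w < b -> 2 <= (xa && adj w a) + (xb && adj w b) + cdom_in S a b w) ->
  forall w, a <= w <= b ->
  2 <= \sum_(a <= u < b.+1) (frame a b xa xb S u && ((u == w) || adj w u)).
Proof.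
move=> lt_ab adj_ab dom_a dom_b dom_in w /andP[le_aw le_wb].
rewrite (@sum_frame_set a b xa xb S (fun x u => x && ((u == w) || adj w u)) lt_ab).
have := nbrs_le_cdom S a b w; rewrite /nbrs_in /cdom_in.
have [eq_aw|ne_aw] := eqVneq a w.
  by move: dom_a; rewrite -eq_aw /nbrs_in adj_ab !orbT !andbT; lia.
have [eq_bw|ne_bw] := eqVneq b w.
  by move: dom_b; rewrite -eq_bw /nbrs_in adj_sym adj_ab !orbT !andbT; lia.
have w_in : a < w < b by rewrite ltn_neqAle ne_aw le_aw ltn_neqAle eq_sym ne_bw.
by have := dom_in w w_in; rewrite /cdom_in /=; lia.
Qed.

Lemma top_certificate N c p1 p2 (e1 e2 : bool) :
  0 < c < N -> adj 0 c -> adj c N -> adj 0 N ->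
  valid 0 c p1 -> valid c N p2 -> top_pair_ok (p1, e1) (p2, e2) ->
  (e1 -> deg2 0) -> (e2 -> deg2 N) -> (e1 && e2 -> deg2 c) ->
  exists X : nat -> bool,
    (forall w, w <= N -> 2 <= \sum_(0 <= u < N.+1) (X u && ((u == w) || adj w u))) /\
    2 * \sum_(0 <= u < N.+1) X u <= N.+1 + \sum_(0 <= u < N.+1) deg2 u.
Proof.
move=> cN adj_0c adj_cN adj_0N valid1 valid2 ok.
move=> /leq_bool e1_le /leq_bool e2_le /leq_bool e12_le.
have N_pos : 0 < N by case/andP: cN => c_pos /(ltn_trans c_pos).
case/hasP: ok => xa _ /hasP[xb _ /hasP[xc _ /hasP[d1a d1a_in /hasP[d1b d1b_in]]]].
case/hasP=> d2a d2a_in /hasP[d2b d2b_in /and4P[dom_0 dom_N dom_c]] /=.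
case E1: cost => [Q1|] //; case E2: cost => [Q2|] // cost_le.
move: d1a_in d1b_in d2a_in d2b_in; rewrite !mem_demands => d1a_in d1b_in d2a_in d2b_in.
have [S1 real1] := valid1 _ _ _ _ _ d1a_in d1b_in E1.
have [S2 real2] := valid2 _ _ _ _ _ d2a_in d2b_in E2.
have [size_S nbrs_0 nbrs_N dom_S] := realizes_glue cN adj_0c adj_cN real1 real2 dom_c.
exists (frame 0 N xa xb (glue c S1 xc S2)); split.
  move=> w w_le; apply: frame_dominates => //.
  - by move: dom_0 nbrs_0; clear; lia.
  - by move: dom_N nbrs_N; clear; lia.
rewrite (@sum_frame_set 0 N xa xb _ (fun x _ => nat_of_bool x) N_pos) (sum_frame _ N_pos).
by move: size_S cost_le e1_le e2_le e12_le; rewrite /size_in /deg2_in; clear -N_pos; lia.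
Qed.

End Certificates.

Section Triangulation.

Variable T : finType.
Variable e : rel T.
Hypothesis e_sym : symmetric e.
Hypothesis e_irr : irreflexive e.
Variable f : T -> 'I_#|T|.
Hypothesis f_noncrossing : forall a b c d, e a b -> e c d -> ~~ chords_cross f a b c d.
Hypothesis e_maximal : forall x y, x != y -> ~~ e x y -> ~ outerplanar (add_edge e x y).
Variable v : nat -> T.
Hypothesis vK : cancel f v.
Hypothesis fv : forall p, p < #|T| -> (f (v p) : nat) = p.

Local Notation n := #|T|.

Definition pos_adj : rel nat := fun p q => e (v p) (v q).
Definition pos_deg2 (p : nat) : bool := deg e (v p) == 2.

Lemma f_inj : injective f. Proof. exact: can_inj vK. Qed.

Lemma v_eq p q : p < n -> q < n -> (v p == v q) = (p == q).
Proof. by move=> p_lt q_lt; apply/eqP/eqP => [eq_v|->//]; rewrite -(fv p_lt) -(fv q_lt) eq_v. Qed.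

Lemma pos_adj_sym : symmetric pos_adj.
Proof. by move=> p q; rewrite /pos_adj e_sym. Qed.

Lemma pos_adj_neq p q : pos_adj p q -> p != q.
Proof. by apply: contraTneq => ->; rewrite /pos_adj e_irr. Qed.

Lemma pos_noncrossing p q r s : p < n -> q < n -> r < n -> s < n ->
  pos_adj p q -> pos_adj r s -> ~~ crossing p q r s.
Proof.
move=> p_lt q_lt r_lt s_lt adj_pq adj_rs.
by have := f_noncrossing adj_pq adj_rs; rewrite (chords_cross_crossing _ _ _ _ f_inj) !fv.
Qed.

Lemma no_nested_edge p q r s : p < r < q -> s < p \/ q < s -> q < n -> s < n ->
  pos_adj p q -> pos_adj r s -> False.
Proof.
move=> r_in s_out q_lt s_lt adj_pq adj_rs.
have [p_lt r_lt] : p < n /\ r < n by lia.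
by have := pos_noncrossing p_lt q_lt r_lt s_lt adj_pq adj_rs; rewrite crossing_nested.
Qed.

Lemma uncrossed_chord_is_edge p q : p < q -> q < n ->
  (forall r s, r < n -> s < n -> pos_adj r s -> p < r < q -> s < p \/ q < s -> False) ->
  pos_adj p q.
Proof.
move=> lt_pq q_lt no_cross; apply/negPn/negP => not_adj.
have p_lt : p < n := ltn_trans lt_pq q_lt.
apply: (e_maximal _ not_adj); first by rewrite v_eq // neq_ltn lt_pq.
apply: outerplanar_add_edge f_inj f_noncrossing _ => c d e_cd.
rewrite (chords_cross_crossing _ _ _ _ f_inj) !fv //.
apply/negP; rewrite /crossing !between_lt // => /and5P[_ _ ne_pc ne_pd /and3P[ne_qc ne_qd]].
have adj_cd : pos_adj (f c) (f d) by rewrite /pos_adj !vK.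
have [c_lt d_lt] := (ltn_ord (f c), ltn_ord (f d)).
case: (boolP (p < f c < q)) => c_in; case: (boolP (p < f d < q)) => d_in //= _.
  by apply: (no_cross _ _ c_lt d_lt adj_cd c_in); move: d_in; rewrite negb_and -!leqNgt; lia.
apply: (no_cross _ _ d_lt c_lt _ d_in); first by rewrite pos_adj_sym.
by move: c_in; rewrite negb_and -!leqNgt; lia.
Qed.

(* Every edge ab spanning inner vertices is the side of a triangle abc with
   a < c < b: take c the last neighbour of a before b. *)
Lemma triangle_apex a b : a.+1 < b -> b < n -> pos_adj a b ->
  exists c, [/\ a < c < b, pos_adj a c & pos_adj c b].
Proof.
move=> lt_ab b_lt adj_ab.
have ex_c : exists c, (a < c < b) && pos_adj a c.
  exists a.+1; rewrite leqnn lt_ab /=.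
  by apply: uncrossed_chord_is_edge; [|lia|move=> r s _ _ _; lia].
have ub_c c : (a < c < b) && pos_adj a c -> c <= b by case/andP=> /andP[_ /ltnW].
case: (ex_maxnP ex_c ub_c) => c /andP[c_in adj_ac] c_max.
exists c; split => //; apply: uncrossed_chord_is_edge; [lia|lia|].
move=> r s r_lt s_lt adj_rs r_in [] s_out.
- case: (ltngtP s a) => [lt_sa|lt_as|eq_sa].
  + by apply: (no_nested_edge (p:=a) (q:=b) (r:=r) (s:=s)) => //; lia.
  + apply: (no_nested_edge (p:=a) (q:=c) (r:=s) (s:=r)) => //; [lia|lia|lia|].
    by rewrite pos_adj_sym.
  + by subst s; have := c_max r; rewrite pos_adj_sym adj_rs andbT => /(_ ltac:(lia)); lia.
- by apply: (no_nested_edge (p:=a) (q:=b) (r:=r) (s:=s)) => //; lia.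
Qed.

(* A vertex w adjacent to both ends of an edge pq has degree 2 when every
   other vertex lies on the other side of pq: further edges at w would cross
   pq.  This covers ears and the ends of the outer edge. *)
Lemma deg2_separated w p q : w < n -> p < n -> q < n ->
  pos_adj w p -> pos_adj w q -> pos_adj p q ->
  (forall r, r < n -> r != w -> r != p -> r != q -> between p q r = ~~ between p q w) ->
  pos_deg2 w.
Proof.
move=> w_lt p_lt q_lt adj_wp adj_wq adj_pq sep; have ne_pq := pos_adj_neq adj_pq.
rewrite /pos_deg2 /deg (_ : [set u | e (v w) u] = [set v p; v q]).
  by rewrite cards2 (v_eq p_lt q_lt) ne_pq.
apply/setP => u; rewrite !inE; apply/idP/idP => [e_wu|/orP[]/eqP->] //.
have adj_wr : pos_adj w (f u) by rewrite /pos_adj vK.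
rewrite -(vK u) !v_eq //; apply/negPn/negP; rewrite negb_or => /andP[ne_rp ne_rq].
have ne_wr := pos_adj_neq adj_wr; have ne_wp := pos_adj_neq adj_wp.
have ne_wq := pos_adj_neq adj_wq.
have ne_rw : (f u : nat) != w by rewrite eq_sym.
have sep_r := sep _ (ltn_ord _) ne_rw ne_rp ne_rq.
have := pos_noncrossing p_lt q_lt w_lt (ltn_ord (f u)) adj_pq adj_wr; apply/negP.
rewrite negbK /crossing sep_r; case: (between p q w); rewrite /= andbT.
all: by repeat (apply/andP; split); rewrite // eq_sym.
Qed.

Lemma profile_exists k a b : b - a <= k -> a < b -> b < n -> pos_adj a b ->
  exists2 p, valid pos_adj pos_deg2 a b p & (p, a.+1 == b) \in tagged_profiles.
Proof.
elim: k a b => [|k IH] a b le_k lt_ab b_lt adj_ab; first lia.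
have [<-|ne_ab] := eqVneq a.+1 b.
  by exists edge_profile; [exact: valid_edge | rewrite ?eqxx mem_head].
have lt_ab2 : a.+1 < b by rewrite ltn_neqAle ne_ab lt_ab.
have [c [c_in adj_ac adj_cb]] := triangle_apex lt_ab2 b_lt adj_ab.
have [p1 valid1 mem1] := IH a c ltac:(lia) ltac:(lia) ltac:(lia) adj_ac.
have [p2 valid2 mem2] := IH c b ltac:(lia) ltac:(lia) b_lt adj_cb.
have /hasP[q q_in glue_q] := allP (allP closure_okT _ mem1) _ mem2.
exists q; last by rewrite inE map_f ?orbT.
apply: (valid_glue pos_adj_sym c_in adj_ac adj_cb _ valid1 valid2 glue_q).
move=> /andP[/eqP eq_ac /eqP eq_cb] /=.
have adj_ca : pos_adj c a by rewrite pos_adj_sym.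
have [a_lt c_lt] : a < n /\ c < n by lia.
apply: (deg2_separated c_lt a_lt b_lt adj_ca adj_cb adj_ab) => r r_lt ne_rc ne_ra ne_rb.
by rewrite !between_lt // c_in; apply/negbTE/negP => /andP[]; lia.
Qed.

Lemma double_dominating_positions : 2 < n -> exists X : nat -> bool,
  (forall w, w < n -> 2 <= \sum_(0 <= u < n) (X u && ((u == w) || pos_adj w u))) /\
  2 * \sum_(0 <= u < n) X u <= n + \sum_(0 <= u < n) pos_deg2 u.
Proof.
move=> n_gt2; have [N n_eq] : {N | n = N.+1} by exists n.-1; lia.
have N_lt : N < n by rewrite n_eq.
have adj_0N : pos_adj 0 N.
  by apply: uncrossed_chord_is_edge; [lia | lia | move=> r s _ s_lt _ _; lia].
have [c [c_in adj_0c adj_cN]] := triangle_apex (a:=0) (b:=N) ltac:(lia) N_lt adj_0N.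
have [c_pos lt_cN] := andP c_in.
have [p1 valid1 mem1] := profile_exists (leqnn _) c_pos (ltn_trans lt_cN N_lt) adj_0c.
have [p2 valid2 mem2] := profile_exists (leqnn _) lt_cN N_lt adj_cN.
have top := allP (allP top_okT _ mem1) _ mem2.
have [zero_lt c_lt] : 0 < n /\ c < n by lia.
rewrite n_eq; apply: (top_certificate pos_adj_sym c_in adj_0c adj_cN adj_0N valid1 valid2 top).
(* when 0c (resp. cN) is a polygon edge, 0 (resp. N) is an ear *)
- move=> /eqP eq_1c; subst c.
  apply: (deg2_separated zero_lt c_lt N_lt adj_0c adj_0N adj_cN).
  by move=> r r_lt ne_r0 ne_r1 ne_rN; rewrite !between_lt //=; apply/andP; split; lia.
- move=> /eqP eq_cN; have adj_N0 : pos_adj N 0 by rewrite pos_adj_sym.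
  have adj_Nc : pos_adj N c by rewrite pos_adj_sym.
  apply: (deg2_separated N_lt zero_lt c_lt adj_N0 adj_Nc adj_0c) => r r_lt ne_rN ne_r0 ne_rc.
  rewrite !between_lt //= [N < c]ltnNge (ltnW lt_cN) andbF.
  by apply/andP; split; lia.
- move=> /andP[/eqP eq_1c /eqP eq_cN]; have adj_c0 : pos_adj c 0 by rewrite pos_adj_sym.
  (* the triangle 0cN is the whole graph: no other vertex *)
  by apply: (deg2_separated c_lt zero_lt N_lt adj_c0 adj_cN adj_0N) => r r_lt; lia.
Qed.

Lemma card_positions (P : pred T) : #|[set x | P x]| = \sum_(0 <= p < n) P (v p).
Proof.
rewrite -sum1_card big_mkcond /= (reindex (fun i : 'I_n => v i)) /=; last first.
  by apply: onW_bij; exists f => [i|x]; [apply: val_inj; rewrite /= fv | exact: vK].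
by rewrite big_mkord; apply: eq_bigr => i _; rewrite inE; case: (P _).
Qed.

Lemma double_dominating_set : 2 < n ->
  exists2 S : {set T}, double_dominating e S & 2 * #|S| <= n + num_deg2 e.
Proof.
move=> n_gt2; have [X [dom_X size_X]] := double_dominating_positions n_gt2.
exists [set x | X (f x)].
  apply/forallP => x; have := dom_X _ (ltn_ord (f x)).
  rewrite (_ : cnbhd e x :&: _ = [set u | ((u == x) || e x u) && X (f u)]); last first.
    by apply/setP => u; rewrite !inE andbC.
  rewrite card_positions; congr (_ <= _); apply: eq_big_nat => p /andP[_ p_lt].
  have eq_vp : (v p == x) = (p == f x) by rewrite -(v_eq p_lt (ltn_ord (f x))) vK.
  by rewrite fv // eq_vp /pos_adj vK andbC.
rewrite /num_deg2 !card_positions.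
by under eq_big_nat => p /andP[_ p_lt] do rewrite fv //.
Qed.

End Triangulation.

Lemma position_inverse (T : finType) (f : T -> 'I_#|T|) : injective f -> 0 < #|T| ->
  exists2 v : nat -> T, cancel f v & forall p, p < #|T| -> (f (v p) : nat) = p.
Proof.
move=> f_inj /card_gt0P[x0 _].
have [g fK gK] : bijective f by apply: inj_card_bij; rewrite // card_ord.
exists (fun p => if insub p is Some i then g i else x0) => [x|p p_lt].
  by rewrite valK fK.
by case: insubP => [i _ <-|]; [rewrite gK | rewrite p_lt].
Qed.

Lemma bigmin_le_cond (I : finType) (P : pred I) (F : I -> nat) x i0 :
  P i0 -> \big[minn/x]_(i | P i) F i <= F i0.
Proof.
move=> P_i0; have : i0 \in index_enum I := mem_index_enum i0.
elim: (index_enum I) => [//|j r IH]; rewrite inE big_cons => /orP[/eqP<-|/IH le_r].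
  by rewrite P_i0 geq_minl.
by case: (P j) => //; exact: leq_trans (geq_minr _ _) le_r.
Qed.

Theorem theorem3p5 (T : finType) (e : rel T) :
  simple_graph e -> maximal_outerplanar e -> 3 <= #|T| ->
  double_dom_number e <= (#|T| + num_deg2 e) %/ 2.
Proof.
move=> [e_sym e_irr] [[f [f_inj f_noncrossing]] e_maximal] n_ge3.
have [v vK fv] := position_inverse f_inj (leq_trans (isT : 0 < 3) n_ge3).
have [S dd_S size_S] := double_dominating_set e_sym e_irr f_noncrossing e_maximal vK fv n_ge3.
rewrite leq_divRL // mulnC; apply: leq_trans size_S; rewrite leq_mul2l /=.
exact: bigmin_le_cond dd_S.
Qed.
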